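(* Let $h_1\subsetneq h_2^*$ be strongly separated half-spaces, let $\xi_1\in h_1$ and $\xi_2\in h_2$ be points of $\overline X$, and let $p\in B(h_1,h_2)$. Then $m(\xi_1,p,\xi_2)=p$.
   Context: $X$ is a finite-dimensional CAT(0) cube complex identified with its vertex set, $\mathfrak H$ its set of half-spaces, $h^*=X\setminus h$, $U_v=\{h:v\in h\}$; the Roller compactification $\overline X$ is the closure of $\{U_v\}$ in $2^{\mathfrak H}$, each $\xi\in\overline X$ a subset $U_\xi$, and a half-space $h$ is regarded as $\{\xi\in\overline X:h\in U_\xi\}$. The median $m(u,v,w)$ of $u,v,w\in\overline X$ is the point with $U_m=(U_u\cap U_v)\cup(U_v\cap U_w)\cup(U_w\cap U_u)$. Transverse ($\pitchfork$): all four intersections $h\cap k,h\cap k^*,h^*\cap k,h^*\cap k^*$ nonempty; strongly separated: no half-space transverse to both. Write $\hat a\subset b$ if $a\subsetneq b$ or $a^*\subsetneq b$. $\beta(h_1,h_2)$ is the set of $h$ with ($\hat h_1\subset h$, $h\pitchfork h_2$) or ($\hat h_2\subset h$, $h\pitchfork h_1$) or ($\hat h_1\subset h$, $\hat h_2\subset h$); $B(h_1,h_2)=\{x\in X:x\in h\ \forall h\in\beta(h_1,h_2)\}$. *)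

(* A finite-dimensional CAT(0) cube complex is modelled through
   its 1-skeleton, i.e. a median graph (Chepoi / Roller / Gerasimov), with the
   vertex set V identified with X. *)
From Stdlib Require Import List Arith.
Import ListNotations.

Set Implicit Arguments.

Section Defs.
Variable V : Type.
Variable adj : V -> V -> Prop.

Inductive walk : V -> V -> nat -> Prop :=
| walk0 x : walk x x 0
| walkS x y z n : adj x y -> walk y z n -> walk x z (S n).

Definition dist (x y : V) (n : nat) : Prop :=
  walk x y n /\ forall m, walk x y m -> n <= m.

Definition simple_graph : Prop :=
  (forall x y, adj x y -> adj y x) /\ (forall x, ~ adj x x).

Definition connected : Prop := forall x y, exists n, walk x y n.

Definition in_interval (x y z : V) : Prop :=
  exists a b, dist x z a /\ dist z y b /\ dist x y (a + b).

Definition median_graph : Prop :=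
  simple_graph /\ connected /\
  forall x y z, exists! m, in_interval x y m /\ in_interval y z m /\ in_interval x z m.

Definition convex (A : V -> Prop) : Prop :=
  forall x y z, A x -> A y -> in_interval x y z -> A z.

Definition hstar (h : V -> Prop) : V -> Prop := fun x => ~ h x.

Definition halfspace (h : V -> Prop) : Prop :=
  (exists x, h x) /\ (exists x, ~ h x) /\ convex h /\ convex (hstar h).

Definition meets (A B : V -> Prop) : Prop := exists x, A x /\ B x.

Definition transverse (h k : V -> Prop) : Prop :=
  meets h k /\ meets h (hstar k) /\ meets (hstar h) k /\ meets (hstar h) (hstar k).

Definition strongly_separated (h1 h2 : V -> Prop) : Prop :=
  ~ exists k, halfspace k /\ transverse k h1 /\ transverse k h2.

Definition subset (A B : V -> Prop) : Prop := forall x, A x -> B x.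
Definition psubset (A B : V -> Prop) : Prop := subset A B /\ exists x, B x /\ ~ A x.

Definition hat_sub (a b : V -> Prop) : Prop := psubset a b \/ psubset (hstar a) b.

Definition beta (h1 h2 h : V -> Prop) : Prop :=
  halfspace h /\
  ((hat_sub h1 h /\ transverse h h2) \/
   (hat_sub h2 h /\ transverse h h1) \/
   (hat_sub h1 h /\ hat_sub h2 h)).

Definition Bset (h1 h2 : V -> Prop) (x : V) : Prop :=
  forall h, beta h1 h2 h -> h x.

Definition finite_dim : Prop :=
  exists D, forall l : list (V -> Prop),
    (forall h, In h l -> halfspace h) ->
    (forall i j, i < j -> j < length l ->
        transverse (nth i l (fun _ => False)) (nth j l (fun _ => False))) ->
    length l <= D.

Definition Uv (v : V) (h : V -> Prop) : Prop := halfspace h /\ h v.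

(* points of the Roller compactification: subsets U of the set of half-spaces
   lying in the closure of {U_v} in the product topology of 2^H *)
Definition roller_point (U : (V -> Prop) -> Prop) : Prop :=
  (forall h, U h -> halfspace h) /\
  forall F : list (V -> Prop), (forall h, In h F -> halfspace h) ->
    exists v, forall h, In h F -> (U h <-> h v).

Definition median3 (U1 U2 U3 : (V -> Prop) -> Prop) (h : V -> Prop) : Prop :=
  (U1 h /\ U2 h) \/ (U2 h /\ U3 h) \/ (U3 h /\ U1 h).

End Defs.

(* A half-space [h] containing [p] that lies in the median of [xi1, p, xi2]
   belongs to [xi1] or [xi2]; approximating the Roller point by a vertex shows
   that [h] then meets [h1] or [h2] respectively, and [hstar h] meets the other
   one.  Because [h1] and [h2] are strongly separated, a half-space meeting both
   cannot be transverse to both, and a non-transverse half-space meeting the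
   disjoint [h1] and [h2] properly contains [h1], [h2] or a complement: so it
   lies in [beta h1 h2].  This would put [hstar h] in [beta h1 h2], hence
   [p] in [hstar h], a contradiction. *)
From Stdlib Require Import List Classical.
Import ListNotations.

Set Implicit Arguments.
Unset Strict Implicit.

Section HalfSpaces.
Variable V : Type.
Variable adj : V -> V -> Prop.

Lemma halfspace_hstar (h : V -> Prop) :
  halfspace adj h -> halfspace adj (hstar h).
Proof.
  intros [[x hx] [[y nhy] [Ch Chs]]].
  split; [exists y; exact nhy |].
  split; [exists x; intro nhx; exact (nhx hx) |].
  split; [exact Chs |].
  intros a b z nna nnb Iz nhz.
  apply nhz, (Ch a b z); [apply NNPP; exact nna | apply NNPP; exact nnb | exact Iz].
Qed.

Lemma roller_point_witness (U : (V -> Prop) -> Prop) (a k : V -> Prop) :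
  roller_point adj U -> U a -> halfspace adj k ->
  exists v, a v /\ (U k <-> k v).
Proof.
  intros [HUh HUfin] Ua Hk.
  destruct (HUfin [a; k]) as [v Hv].
  { intros g [<- | [<- | []]]; [exact (HUh a Ua) | exact Hk]. }
  exists v. split.
  - apply (Hv a); simpl; auto.
  - apply (Hv k); simpl; auto.
Qed.

Lemma roller_point_meets (U : (V -> Prop) -> Prop) (a k : V -> Prop) :
  roller_point adj U -> U a -> U k -> meets k a.
Proof.
  intros HU Ua Uk.
  destruct (roller_point_witness HU Ua (proj1 HU k Uk)) as [v [av Hv]].
  exists v. split; [apply Hv; exact Uk | exact av].
Qed.

Lemma roller_point_meets_hstar (U : (V -> Prop) -> Prop) (a k : V -> Prop) :
  roller_point adj U -> U a -> halfspace adj k -> ~ U k -> meets (hstar k) a.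
Proof.
  intros HU Ua Hk nUk.
  destruct (roller_point_witness HU Ua Hk) as [v [av Hv]].
  exists v. split; [intro kv; apply nUk, Hv, kv | exact av].
Qed.

Lemma hat_sub_of_not_transverse (a b k : V -> Prop) :
  subset a (hstar b) -> meets k a -> meets k b -> ~ transverse k a ->
  hat_sub a k.
Proof.
  intros Dab [x [kx ax]] [y [ky hby]] NT.
  destruct (classic (meets (hstar k) a)) as [[z [nkz az]] | Nka].
  - right. split.
    + intros w naw. apply NNPP. intro nkw.
      apply NT. repeat split.
      * exists x; auto.
      * exists y. split; [exact ky | intro ay; exact (Dab y ay hby)].
      * exists z; auto.
      * exists w; auto.
    + exists x. split; [exact kx | intro nax; exact (nax ax)].
  - left. split.
    + intros w aw. apply NNPP. intro nkw. apply Nka. exists w; auto.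
    + exists y. split; [exact ky | intro ay; exact (Dab y ay hby)].
Qed.

Lemma beta_of_meets (h1 h2 k : V -> Prop) :
  psubset h1 (hstar h2) -> strongly_separated adj h1 h2 ->
  halfspace adj k -> meets k h1 -> meets k h2 -> beta adj h1 h2 k.
Proof.
  intros [D12 _] Hss Hk M1 M2.
  assert (D21 : subset h2 (hstar h1)) by (intros x h2x h1x; exact (D12 x h1x h2x)).
  split; [exact Hk |].
  destruct (classic (transverse k h1)) as [T1 | T1];
  destruct (classic (transverse k h2)) as [T2 | T2].
  - exfalso. apply Hss. exists k. auto.
  - right; left. split; [apply (hat_sub_of_not_transverse D21 M2 M1 T2) | exact T1].
  - left. split; [apply (hat_sub_of_not_transverse D12 M1 M2 T1) | exact T2].
  - right; right. split.
    + apply (hat_sub_of_not_transverse D12 M1 M2 T1).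
    + apply (hat_sub_of_not_transverse D21 M2 M1 T2).
Qed.

End HalfSpaces.

Theorem lemma3 (V : Type) (adj : V -> V -> Prop)
  (HX : median_graph adj) (Hfd : finite_dim adj)
  (h1 h2 : V -> Prop) (Hh1 : halfspace adj h1) (Hh2 : halfspace adj h2)
  (Hsub : psubset h1 (hstar h2)) (Hss : strongly_separated adj h1 h2)
  (U1 U2 : (V -> Prop) -> Prop)
  (HU1 : roller_point adj U1) (HU2 : roller_point adj U2)
  (Hxi1 : U1 h1) (Hxi2 : U2 h2)
  (p : V) (Hp : Bset adj h1 h2 p) :
  forall h, median3 U1 (Uv adj p) U2 h <-> Uv adj p h.
Proof.
  intros h. unfold median3. split.
  - intros [[_ Hph] | [[Hph _] | [U2h U1h]]]; try exact Hph.
    pose proof (proj1 HU1 h U1h) as Hh.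
    split; [exact Hh |].
    apply Hp, beta_of_meets; auto.
    + exact (roller_point_meets HU1 Hxi1 U1h).
    + exact (roller_point_meets HU2 Hxi2 U2h).
  - intros [Hh hp].
    destruct (classic (U1 h)) as [U1h | nU1h]; [left; split; [exact U1h | split; auto] |].
    destruct (classic (U2 h)) as [U2h | nU2h]; [right; left; split; [split; auto | exact U2h] |].
    exfalso.
    assert (Hb : beta adj h1 h2 (hstar h)).
    { apply beta_of_meets; auto using halfspace_hstar.
      + exact (roller_point_meets_hstar HU1 Hxi1 Hh nU1h).
      + exact (roller_point_meets_hstar HU2 Hxi2 Hh nU2h). }
    exact (Hp _ Hb hp).
Qed.
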